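(* Let $X$ be a set, $T:X\to X$ a map, and $G$ a finite group acting on $X$ such that $g\circ T=T\circ g$ for all $g\in G$. Let $x\in X$ be a periodic point of $T$. Then the number of orbits that glue to $\mathfrak{O}_T(x)$ (including $\mathfrak{O}_T(x)$ itself) equals \[ \frac{|\mathfrak{O}_G(x)|}{|\mathfrak{O}_T(x)\cap\mathfrak{O}_G(x)|}. \]
   Context: For $x\in X$, $\mathfrak{O}_T(x)=\{T^j(x): j\geqslant 0\}$ is the (closed, i.e. finite) orbit of $x$ under $T$, and $\mathfrak{O}_G(x)=\{g(x):g\in G\}$ is the orbit of $x$ under $G$. Let $X'=G\backslash X$, $\pi:X\to X'$ the quotient map $\pi(x)=\mathfrak{O}_G(x)$, and $T':X'\to X'$ the induced map $T'(\mathfrak{O}_G(x))=\mathfrak{O}_G(T(x))$. The ''orbits that glue to $\mathfrak{O}_T(x)$'' are the distinct closed $T$-orbits $\mathfrak{O}_T(y)$, $y\in X$, which are mapped by $\pi$ onto the same $T'$-orbit as $\mathfrak{O}_T(x)$, i.e. with $\pi(\mathfrak{O}_T(y))=\pi(\mathfrak{O}_T(x))$. *)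

From HB Require Import structures.
From mathcomp Require Import all_boot all_order all_algebra all_fingroup.
From mathcomp Require Import boolp classical_sets functions cardinality.
Set Implicit Arguments. Unset Strict Implicit. Unset Printing Implicit Defensive.

Local Open Scope classical_set_scope.

Definition Torb (X : Type) (T : X -> X) (x : X) : set X :=
  [set iter j T x | j in [set: nat]].

Definition Gorb (gT : finGroupType) (X : Type) (act : gT -> X -> X) (x : X)
  : set X := [set act g x | g in [set: gT]].

Definition is_left_action (gT : finGroupType) (X : Type) (act : gT -> X -> X) :=
  (forall x, act 1%g x = x) /\ (forall g h x, act (g * h)%g x = act g (act h x)).

Definition periodic_pt (X : Type) (T : X -> X) (x : X) :=
  exists n, (0 < n)%N /\ iter n T x = x.

(* pi(A) for A a subset of X: the set of G-orbits of points of A (subset of X') *)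
Definition piS (gT : finGroupType) (X : Type) (act : gT -> X -> X) (A : set X)
  : set (set X) := [set Gorb act z | z in A].

Definition glued (gT : finGroupType) (X : Type) (act : gT -> X -> X)
  (T : X -> X) (x : X) : set (set X) :=
  [set S | exists y, S = Torb T y /\ piS act (Torb T y) = piS act (Torb T x)].

From HB Require Import structures.
From mathcomp Require Import all_boot all_order all_algebra all_fingroup.
From mathcomp Require Import boolp classical_sets functions cardinality.

Set Implicit Arguments.
Unset Strict Implicit.
Unset Printing Implicit Defensive.

(* Let S be the stabilizer of x and H = {g | g x \in O_T(x)}.  The fibres of
   g |-> g x are cosets of S, so |G| = |O_G(x)| |S| and |H| = |O_T(x) \cap O_G(x)| |S|.
   The glued orbits are exactly the O_T(g x), and since x is periodic the
   T-orbits of the points g x partition them, with O_T(g x) = O_T(h x) iff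
   h^-1 g \in H; hence |G| = (number of glued orbits) |H|.  Dividing the two
   expressions of |G| gives the formula. *)

Local Open Scope card_scope.

Lemma card_constant_fibers (I : finType) (Y : Type) (D : set I) (f : I -> Y)
    (k n : nat) :
  (f @` D)%classic #= `I_n ->
  (forall j, D j -> #|[set i | `[< D i /\ f i = f j >]]| = k) ->
  #|[set i | `[< D i >]]| = (n * k)%N.
Proof.
move=> /card_set_bijP [phi [phi_fun phi_inj phi_surj]] fibk.
pose c i := phi (f i).
have c_lt i : D i -> (c i < n)%N by move=> Di; apply: phi_fun; exists i.
rewrite -sum1_card.
transitivity (\sum_(i in [set i | `[< D i >]]) \sum_(m < n) (c i == m : nat)).
  apply: eq_bigr => i; rewrite inE => /asboolP Di.
  rewrite (bigD1 (Ordinal (c_lt i Di))) //= eqxx big1 // => m /negP m_neq.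
  by case: eqP => // ci_m; case: m_neq; apply/eqP/val_inj.
rewrite exchange_big /=.
transitivity (\sum_(m < n) k); last by rewrite sum_nat_const card_ord.
apply: eq_bigr => m _.
have [_ [j Dj <-] phi_m] : exists2 y, (f @` D)%classic y & phi y = m.
  by have [y Dy <-] := phi_surj m (ltn_ord m); exists y.
rewrite -(fibk j Dj) -sum1_card big_mkcond [RHS]big_mkcond /=.
apply: eq_bigr => i _; rewrite !inE.
case: (asboolP (D i)) => Di /=; last by case: asboolP => // -[].
case: asboolP => [[_ fij]|fij] /=; first by rewrite /c fij phi_m eqxx.
case: eqP => // ci_m; case: fij; split => //.
by apply: phi_inj; [apply/mem_set; exists i|apply/mem_set; exists j|rewrite -/(c i) ci_m].
Qed.

Lemma card_translate (gT : finGroupType) (P Q : gT -> Prop) (j : gT) :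
  (forall i, P i <-> Q (j^-1 * i)%g) ->
  #|[set i | `[< P i >]]| = #|[set i | `[< Q i >]]|.
Proof.
move=> PQ; rewrite -[RHS](card_imset _ (mulgI j)); apply: eq_card => i.
rewrite inE; apply/asboolP/imsetP.
- by move=> /PQ Qi; exists (j^-1 * i)%g; rewrite ?inE ?mulKVg //; apply/asboolP.
- by case=> h; rewrite inE => /asboolP Qh ->; apply/PQ; rewrite mulKg.
Qed.

Local Open Scope classical_set_scope.

Lemma iter_period_mul (X : Type) (T : X -> X) (z : X) (p : nat) :
  iter p T z = z -> forall a, iter (p * a) T z = z.
Proof.
move=> zp; elim=> [|a IH]; first by rewrite muln0.
by rewrite mulnS iterD IH zp.
Qed.

Lemma Torb_periodic_eq (X : Type) (T : X -> X) (z w : X) :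
  periodic_pt T z -> Torb T z w -> Torb T w = Torb T z.
Proof.
move=> [p [p_gt0 zp]] [a _ <-]; apply/seteqP; split => y [b _ <-].
  by exists (b + a)%N => //; rewrite iterD.
exists (b + p * a - a)%N => //; rewrite -iterD subnK ?iterD ?iter_period_mul //.
by rewrite (leq_trans (leq_pmull a p_gt0)) // mulnC leq_addl.
Qed.

Section CommutingAction.

Variables (gT : finGroupType) (X : Type) (act : gT -> X -> X) (T : X -> X).
Hypothesis act_left : is_left_action act.
Hypothesis act_T : forall g z, act g (T z) = T (act g z).

Lemma lact1 z : act 1%g z = z.
Proof. by case: act_left. Qed.

Lemma lactM g h z : act (g * h)%g z = act g (act h z).
Proof. by case: act_left. Qed.

Lemma lactK g z : act g^-1%g (act g z) = z.
Proof. by rewrite -lactM mulVg lact1. Qed.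

Lemma lactKV g z : act g (act g^-1%g z) = z.
Proof. by rewrite -lactM mulgV lact1. Qed.

Lemma act_iter g n z : act g (iter n T z) = iter n T (act g z).
Proof. by elim: n => //= n IH; rewrite act_T IH. Qed.

Lemma periodic_act g z : periodic_pt T z -> periodic_pt T (act g z).
Proof. by case=> p [p_gt0 zp]; exists p; rewrite -act_iter zp. Qed.

Lemma Torb_act g z : Torb T (act g z) = act g @` Torb T z.
Proof.
apply/seteqP; split => w.
  by move=> [a _ <-]; exists (iter a T z); [exists a | rewrite act_iter].
by move=> [_ [b _ <-] <-]; exists b => //; rewrite act_iter.
Qed.

Lemma Gorb_act g z : Gorb act (act g z) = Gorb act z.
Proof.
apply/seteqP; split => w [h _ <-].
  by exists (h * g)%g => //; rewrite lactM.
by exists (h * g^-1)%g => //; rewrite lactM lactK.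
Qed.

Variable x : X.
Hypothesis x_periodic : periodic_pt T x.

Let stab := [set g | `[< act g x = x >]]%SET.
Let inTorb (g : gT) := Torb T x (act g x).

Lemma Torb_act_eqP i j :
  Torb T (act i x) = Torb T (act j x) <-> inTorb (j^-1 * i)%g.
Proof.
split=> [Eij | ji_in].
  have : Torb T (act i x) (act i x) by exists 0%N.
  by rewrite Eij Torb_act => -[w Tw Ew]; rewrite /inTorb lactM -Ew lactK.
apply: Torb_periodic_eq; first exact: periodic_act.
by rewrite Torb_act; exists (act (j^-1 * i)%g x) => //; rewrite lactM lactKV.
Qed.

Lemma glued_image : glued act T x = (fun g => Torb T (act g x)) @` setT.
Proof.
apply/seteqP; split => S.
  move=> [y [-> piy]].
  have : piS act (Torb T x) (Gorb act y) by rewrite -piy; exists y => //; exists 0%N.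
  case=> _ [a _ <-] Ea.
  have : Gorb act (iter a T x) (iter a T x) by exists 1%g; rewrite ?lact1.
  rewrite Ea => -[h _ Eh]; exists h^-1%g => //.
  have -> : y = iter a T (act h^-1%g x) by rewrite -act_iter -Eh lactK.
  by symmetry; apply: Torb_periodic_eq; [exact: periodic_act | exists a].
move=> [g _ <-]; exists (act g x); split => //.
rewrite Torb_act; apply/seteqP; split => _ [z Tz <-].
  by case: Tz => w Tw <-; exists w; rewrite ?Gorb_act.
by exists (act g z); [exists z | apply: Gorb_act].
Qed.

Lemma TorbI_Gorb_image :
  Torb T x `&` Gorb act x = (fun g => act g x) @` inTorb.
Proof.
apply/seteqP; split => w; first by move=> [Tw [g _ Eg]]; exists g; rewrite // /inTorb Eg.
by move=> [g ? <-]; split => //; exists g.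
Qed.

Lemma card_act_fiber j : #|[set i | `[< setT i /\ act i x = act j x >]]%SET| = #|stab|.
Proof.
apply: (@card_translate _ _ _ j) => i; split.
  by move=> [_ Eij]; rewrite lactM Eij lactK.
by move=> ji_stab; split => //; rewrite -{1}(mulKVg j i) lactM ji_stab.
Qed.

Lemma card_group_Gorb n : Gorb act x #= `I_n -> #|gT| = (n * #|stab|)%N.
Proof.
move=> Gn; rewrite -(card_constant_fibers Gn (fun j _ => card_act_fiber j)).
by apply: eq_card => i; rewrite inE asboolT.
Qed.

Lemma card_inTorb_TorbI n : Torb T x `&` Gorb act x #= `I_n ->
  #|[set i | `[< inTorb i >]]%SET| = (n * #|stab|)%N.
Proof.
rewrite TorbI_Gorb_image => In; apply: (card_constant_fibers In) => j j_in.
rewrite -(card_act_fiber j); apply: eq_card => i; rewrite !inE.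
by apply/asboolP/asboolP => -[? Eij]; split; rewrite // /inTorb Eij.
Qed.

Lemma card_group_glued n : glued act T x #= `I_n ->
  #|gT| = (n * #|[set i | `[< inTorb i >]]%SET|)%N.
Proof.
rewrite glued_image => Gln.
rewrite -(card_constant_fibers Gln) => [|j _]; first by apply: eq_card => i; rewrite inE asboolT.
by apply: (card_translate (j := j)) => i; rewrite -Torb_act_eqP; split => [[]|].
Qed.

Lemma card_stab_gt0 : (0 < #|stab|)%N.
Proof. by apply/card_gt0P; exists 1%g; rewrite inE; apply/asboolP; rewrite lact1. Qed.

Lemma card_inTorb_gt0 : (0 < #|[set i | `[< inTorb i >]]%SET|)%N.
Proof.
by apply/card_gt0P; exists 1%g; rewrite inE; apply/asboolP; exists 0%N; rewrite ?lact1.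
Qed.

End CommutingAction.

Theorem lemma5 (gT : finGroupType) (X : Type) (act : gT -> X -> X)
  (T : X -> X) (x : X)
  (Hact : is_left_action act)
  (Hcomm : forall g z, act g (T z) = T (act g z))
  (Hper : periodic_pt T x)
  (nGlue nG nI : nat)
  (HnGlue : glued act T x #= `I_nGlue)
  (HnG : Gorb act x #= `I_nG)
  (HnI : (classical_sets.setI (Torb T x) (Gorb act x)) #= `I_nI) :
  (nGlue%:Q = nG%:Q / nI%:Q)%R.
Proof.
have cardG := card_group_Gorb Hact HnG.
have cardH := card_inTorb_TorbI Hact HnI.
have cardGl := card_group_glued Hact Hcomm Hper HnGlue.
have nI_gt0 : (0 < nI)%N.
  by have := card_inTorb_gt0 T Hact x; rewrite cardH muln_gt0 => /andP[].
have -> : nG = (nGlue * nI)%N.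
  by apply/eqP; rewrite -(eqn_pmul2r (card_stab_gt0 Hact x)) -cardG cardGl cardH mulnA.
by rewrite PoszM intrM GRing.mulfK // intr_eq0 eqz_nat -lt0n nI_gt0.
Qed.
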